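(* Let $I$ be a compact interval, $k\ge 2$ an integer, $u\in(0,1]$ and $\tau\in(0,1)$. If $\tau(1+\tau)^{k-2}\ge u$, then $\mathrm{Diff}_+^{1,\tau}(I)$ does not contain a $(k,u)$-nesting.
   Context: $\mathrm{Diff}_+^{1,\tau}(I)$ is the group of orientation-preserving $C^1$-diffeomorphisms of $I$ whose derivative is $\tau$-Hölder continuous. For an integer $k\ge2$ and $u\in(0,1]$, a finite set $S\subseteq\mathrm{Homeo}_+(I)$ is a $(k,u)$-nesting if there exist nonempty open intervals $J_1\supsetneq J_2\supsetneq\cdots\supsetneq J_k$ and an infinite sequence $(s_1,s_2,\ldots)$ of elements of $S$ such that, with $w_n=s_ns_{n-1}\cdots s_1$ for $n\ge0$ ($w_0$ the identity): (i) $\sum_{n\ge0}|w_nJ_1|^u<\infty$, where $|\cdot|$ is length; (ii) for each $i=2,\ldots,k$ and each $n\ge0$ there is $s\in S$ (possibly depending on $i,n$) with $sw_nJ_i\cap w_nJ_i=\varnothing$ and $sw_nJ_{i-1}=w_nJ_{i-1}$. *)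

From Stdlib Require Import Reals List.
From Coquelicot Require Import Coquelicot.
Open Scope R_scope.

Definition inI (a b x : R) : Prop := a <= x <= b.

(* Orientation-preserving homeomorphism of I (values outside I are irrelevant). *)
Definition HomeoPlus (a b : R) (f : R -> R) : Prop :=
  (forall x, inI a b x -> inI a b (f x)) /\
  (forall y, inI a b y -> exists x, inI a b x /\ f x = y) /\
  (forall x y, inI a b x -> inI a b y -> x < y -> f x < f y) /\
  (forall x, inI a b x -> forall eps, 0 < eps -> exists delta, 0 < delta /\
     forall y, inI a b y -> Rabs (y - x) < delta -> Rabs (f y - f x) < eps).

Definition derivI (a b : R) (f : R -> R) (x l : R) : Prop :=
  forall eps, 0 < eps -> exists delta, 0 < delta /\
    forall y, inI a b y -> y <> x -> Rabs (y - x) < delta ->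
      Rabs ((f y - f x) / (y - x) - l) < eps.

(* The derivative is positive on I
   (so the inverse is C^1 as well); continuity of f' follows from Hoelder. *)
Definition Diff1tau (a b tau : R) (f : R -> R) : Prop :=
  HomeoPlus a b f /\
  exists f' : R -> R,
    (forall x, inI a b x -> derivI a b f x (f' x)) /\
    (forall x, inI a b x -> 0 < f' x) /\
    (exists C, 0 <= C /\ forall x y, inI a b x -> inI a b y -> x <> y ->
        Rabs (f' x - f' y) <= C * Rpower (Rabs (x - y)) tau).

Definition openI (c d : R) : R -> Prop := fun x => c < x < d.

Definition img (f : R -> R) (A : R -> Prop) : R -> Prop :=
  fun y => exists x, A x /\ f x = y.

Definition set_eq (A B : R -> Prop) : Prop := forall x, A x <-> B x.
Definition disjoint (A B : R -> Prop) : Prop := forall x, ~ (A x /\ B x).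
Definition strict_sup (A B : R -> Prop) : Prop :=
  (forall x, B x -> A x) /\ exists x, A x /\ ~ B x.

Fixpoint word (s : nat -> R -> R) (n : nat) : R -> R :=
  match n with
  | O => fun x => x
  | S m => fun x => s (S m) (word s m x)
  end.

(* Since w_n is an increasing homeomorphism of I,
   w_n J_1 is the interval (w_n (c 1), w_n (d 1)), of length
   w_n (d 1) - w_n (c 1). *)
Definition nesting (a b : R) (k : nat) (u : R) (S : list (R -> R)) : Prop :=
  (forall f, In f S -> HomeoPlus a b f) /\
  exists (c d : nat -> R) (s : nat -> R -> R),
    (forall i, (1 <= i <= k)%nat -> a <= c i /\ c i < d i /\ d i <= b) /\
    (forall i, (2 <= i <= k)%nat ->
        strict_sup (openI (c (i - 1)%nat) (d (i - 1)%nat)) (openI (c i) (d i))) /\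
    (forall n, (1 <= n)%nat -> In (s n) S) /\
    ex_series (fun n => Rpower (word s n (d 1%nat) - word s n (c 1%nat)) u) /\
    (forall i n, (2 <= i <= k)%nat ->
       exists t, In t S /\
         disjoint (img t (img (word s n) (openI (c i) (d i))))
                  (img (word s n) (openI (c i) (d i))) /\
         set_eq (img t (img (word s n) (openI (c (i - 1)%nat) (d (i - 1)%nat))))
                (img (word s n) (openI (c (i - 1)%nat) (d (i - 1)%nat)))).

From Stdlib Require Import Reals List Lra Lia.
From Coquelicot Require Import Coquelicot.
Open Scope R_scope.

(* Let m > 0 and C bound from below the derivatives and from above the tau-Hoelder
   constants of the finitely many generators, and let l_i(n) = |w_n J_i|.  The map
   that preserves w_n J_(i-1) fixes its endpoints, so its derivative equals 1
   somewhere there; by the mean value theorem it moves points of w_n J_(i-1) by at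
   most C l_(i-1)^(1+tau), and since it displaces w_n J_i off itself,
   l_i <= 2 C l_(i-1)^(1+tau).  Iterating, l_(k-1)^tau <= K l_1^(tau (1+tau)^(k-2)),
   which is dominated by l_1^u and hence summable.  The same Hoelder bound controls
   distortion: passing from w_n to w_(n+1) multiplies the ratio l_k / l_(k-1) by at
   least exp (- (C/m) l_(k-1)^tau), so the ratio stays bounded away from 0, whereas
   it is at most 2 C l_(k-1)^tau, which tends to 0. *)

Definition clamp (a b x : R) : R := Rmax a (Rmin b x).

Lemma clamp_inI a b x : a <= b -> inI a b (clamp a b x).
Proof.
  intros Hab; unfold inI, clamp; split.
  - apply Rmax_l.
  - apply Rmax_lub; [lra | apply Rmin_l].
Qed.

Lemma clamp_id a b x : inI a b x -> clamp a b x = x.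
Proof.
  unfold inI, clamp; intros [Hax Hxb].
  rewrite Rmin_right, Rmax_right; lra.
Qed.

Lemma clamp_dist_le a b x y : a <= b -> Rabs (clamp a b y - clamp a b x) <= Rabs (y - x).
Proof.
  intros Hab; unfold clamp, Rmax, Rmin.
  repeat destruct Rle_dec; unfold Rabs; repeat destruct Rcase_abs; lra.
Qed.

(* Extending f by constants outside I turns one-sided derivatives at the endpoints
   into plain continuity, which is all [MVT_gen] needs there. *)
Lemma mvt_derivI a b f f' x y :
  HomeoPlus a b f -> (forall z, inI a b z -> derivI a b f z (f' z)) ->
  a <= x -> x < y -> y <= b ->
  exists xi, x <= xi <= y /\ f y - f x = f' xi * (y - x).
Proof.
  intros [_ [_ [_ Hcont]]] Hder Hax Hxy Hyb.
  set (F := fun z => f (clamp a b z)).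
  assert (HxyI : forall z, x <= z <= y -> inI a b z) by (unfold inI; intros; lra).
  destruct (MVT_gen F x y f') as [xi [Hxi Heq]];
    rewrite Rmin_left, Rmax_right in * by lra.
  - intros z Hz. apply is_derive_Reals. intros eps Heps.
    destruct (Hder z (HxyI z ltac:(lra)) eps Heps) as [del [Hdel Hq]].
    assert (Hr : 0 < Rmin del (Rmin (z - a) (b - z))) by (repeat apply Rmin_pos; lra).
    exists (mkposreal _ Hr); simpl; intros h Hh0 Hh.
    assert (Hr1 := Rmin_l del (Rmin (z - a) (b - z))).
    assert (Hr2 := Rmin_r del (Rmin (z - a) (b - z))).
    assert (Hr3 := Rmin_l (z - a) (b - z)).
    assert (Hr4 := Rmin_r (z - a) (b - z)).
    assert (Hh1 := Rabs_maj2 h); assert (Hh2 := Rle_abs h).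
    unfold F; rewrite !clamp_id by (unfold inI; lra).
    replace h with ((z + h) - z) at 2 by ring.
    apply Hq; [unfold inI; lra | lra |].
    replace (z + h - z) with h by ring; lra.
  - intros z _. unfold continuity_pt, continue_in, limit1_in, limit_in; simpl.
    unfold R_dist; intros eps Heps.
    destruct (Hcont (clamp a b z) (clamp_inI a b z ltac:(lra)) eps Heps) as [del [Hdel Hq]].
    exists del; split; [lra |]; intros w [_ Hw].
    apply Hq; [apply clamp_inI; lra |].
    eapply Rle_lt_trans; [apply clamp_dist_le; lra | exact Hw].
  - exists xi; split; [exact Hxi |].
    unfold F in Heq; rewrite !clamp_id in Heq by (apply HxyI; lra).
    exact Heq.
Qed.

Definition incr_bij (a b : R) (f : R -> R) : Prop :=
  (forall x, inI a b x -> inI a b (f x)) /\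
  (forall y, inI a b y -> exists x, inI a b x /\ f x = y) /\
  (forall x y, inI a b x -> inI a b y -> x < y -> f x < f y).

Lemma HomeoPlus_incr_bij a b f : HomeoPlus a b f -> incr_bij a b f.
Proof. intros [Hmap [Hsurj [Hincr _]]]; exact (conj Hmap (conj Hsurj Hincr)). Qed.

Lemma word_incr_bij a b s :
  (forall n, (1 <= n)%nat -> incr_bij a b (s n)) -> forall n, incr_bij a b (word s n).
Proof.
  intros Hs n; induction n as [|n [Wmap [Wsurj Wincr]]].
  - split; [|split]; simpl; auto. intros y Hy; exists y; auto.
  - destruct (Hs (S n) ltac:(lia)) as [Smap [Ssurj Sincr]]; simpl.
    split; [|split]; auto.
    intros y Hy; destruct (Ssurj y Hy) as [z [Hz <-]].
    destruct (Wsurj z Hz) as [x [Hx <-]]; eauto.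
Qed.

Lemma incr_bij_le a b f x y :
  incr_bij a b f -> inI a b x -> inI a b y -> x <= y -> f x <= f y.
Proof.
  intros [_ [_ Hincr]] Hx Hy [Hlt | ->]; [left; auto | lra].
Qed.

Lemma incr_bij_lt_inv a b f x y :
  incr_bij a b f -> inI a b x -> inI a b y -> f x < f y -> x < y.
Proof.
  intros Hf Hx Hy Hlt; destruct (Rlt_or_le x y) as [|Hyx]; auto.
  assert (f y <= f x) by (apply (incr_bij_le a b); auto); lra.
Qed.

Lemma img_openI a b f c d :
  incr_bij a b f -> inI a b c -> inI a b d ->
  set_eq (img f (openI c d)) (openI (f c) (f d)).
Proof.
  intros Hf Hc Hd y; unfold img, openI; split.
  - intros [x [Hx <-]]; destruct Hf as [_ [_ Hincr]].
    unfold inI in *; split; apply Hincr; unfold inI; lra.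
  - intros Hy; pose proof Hf as [Hmap [Hsurj _]].
    assert (HyI : inI a b y)
      by (pose proof (Hmap c Hc); pose proof (Hmap d Hd); unfold inI in *; lra).
    destruct (Hsurj y HyI) as [x [Hx <-]].
    exists x; split; [split | reflexivity].
    + apply (incr_bij_lt_inv a b f); auto; lra.
    + apply (incr_bij_lt_inv a b f); auto; lra.
Qed.

Lemma img_img_openI a b f g c d :
  incr_bij a b f -> incr_bij a b g -> inI a b c -> inI a b d ->
  set_eq (img g (img f (openI c d))) (openI (g (f c)) (g (f d))).
Proof.
  intros Hf Hg Hc Hd y.
  pose proof Hf as [Hmap _].
  rewrite <- (img_openI a b g (f c) (f d) Hg (Hmap c Hc) (Hmap d Hd) y).
  split; intros [x [Hx <-]]; exists x; split; auto; apply (img_openI a b f c d); auto.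
Qed.

Lemma openI_incl_le c d c' d' :
  c' < d' -> (forall x, openI c' d' x -> openI c d x) -> c <= c' /\ d' <= d.
Proof.
  unfold openI; intros Hcd' Hincl; split.
  - destruct (Rle_or_lt c c') as [|Hlt]; auto.
    set (x := (c' + Rmin c d') / 2).
    assert (Hm1 := Rmin_l c d'); assert (Hm2 := Rmin_r c d').
    assert (Hm3 : c' < Rmin c d') by (apply Rmin_glb_lt; lra).
    assert (Hx := Hincl x ltac:(unfold x; lra)); unfold x in Hx; lra.
  - destruct (Rle_or_lt d' d) as [|Hlt]; auto.
    set (x := (d' + Rmax d c') / 2).
    assert (Hm1 := Rmax_l d c'); assert (Hm2 := Rmax_r d c').
    assert (Hm3 : Rmax d c' < d') by (apply Rmax_lub_lt; lra).
    assert (Hx := Hincl x ltac:(unfold x; lra)); unfold x in Hx; lra.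
Qed.

Lemma openI_set_eq_endpoints c d c' d' :
  c < d -> c' < d' -> set_eq (openI c d) (openI c' d') -> c = c' /\ d = d'.
Proof.
  intros Hcd Hcd' Heq.
  destruct (openI_incl_le c d c' d' Hcd' (fun x => proj2 (Heq x))).
  destruct (openI_incl_le c' d' c d Hcd (fun x => proj1 (Heq x))).
  split; lra.
Qed.

Definition holder_on (a b tau C : R) (g : R -> R) : Prop :=
  forall x y, inI a b x -> inI a b y -> x <> y ->
    Rabs (g x - g y) <= C * Rpower (Rabs (x - y)) tau.

Definition DiffBounds (a b tau m C : R) (f : R -> R) : Prop :=
  HomeoPlus a b f /\ exists f' : R -> R,
    (forall x, inI a b x -> derivI a b f x (f' x)) /\
    (forall x, inI a b x -> m <= f' x) /\
    holder_on a b tau C f'.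

Lemma Rpower_lt_of_lt_root e tau r :
  0 < e -> 0 < tau -> 0 < r -> r < Rpower e (/ tau) -> Rpower r tau < e.
Proof.
  intros He Htau Hr Hlt.
  assert (Hpow : Rpower r tau < Rpower (Rpower e (/ tau)) tau) by (apply Rlt_Rpower_l; auto).
  rewrite Rpower_mult, Rinv_l, Rpower_1 in Hpow by lra; exact Hpow.
Qed.

Lemma holder_clamp_continuity_pt a b tau C g z :
  a <= b -> 0 < tau -> 0 <= C -> holder_on a b tau C g -> inI a b z ->
  continuity_pt (fun w => g (clamp a b w)) z.
Proof.
  intros Hab Htau HC Hhol Hz.
  unfold continuity_pt, continue_in, limit1_in, limit_in; simpl; unfold R_dist.
  intros eps Heps.
  set (e := eps / (C + 1)).
  assert (He : 0 < e) by (unfold e; apply Rdiv_lt_0_compat; lra).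
  assert (HCe : C * e < eps).
  { assert (e * (C + 1) = eps) by (unfold e; field; lra). nra. }
  exists (Rpower e (/ tau)); split; [apply exp_pos |].
  intros w [_ Hw]; rewrite (clamp_id a b z Hz).
  destruct (Req_dec (clamp a b w) z) as [-> | Hne].
  - rewrite Rminus_diag, Rabs_R0; lra.
  - eapply Rle_lt_trans; [apply Hhol; auto; apply clamp_inI; lra |].
    assert (Hd := clamp_dist_le a b z w Hab); rewrite (clamp_id a b z Hz) in Hd.
    assert (Hpos : 0 < Rabs (clamp a b w - z)) by (apply Rabs_pos_lt; lra).
    assert (Rpower (Rabs (clamp a b w - z)) tau < e) by (apply Rpower_lt_of_lt_root; auto; lra).
    assert (C * Rpower (Rabs (clamp a b w - z)) tau <= C * e) by (apply Rmult_le_compat_l; lra).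
    lra.
Qed.

(* The derivative is continuous, so it attains a positive minimum on the compact I. *)
Lemma Diff1tau_bounds a b tau f :
  a < b -> 0 < tau -> Diff1tau a b tau f ->
  exists m C, 0 < m /\ 0 <= C /\ DiffBounds a b tau m C f.
Proof.
  intros Hab Htau [Hh [f' [Hder [Hpos [C [HC Hhol]]]]]].
  destruct (continuity_ab_min (fun w => f' (clamp a b w)) a b ltac:(lra)) as [xm [Hmin Hxm]].
  { intros z Hz; apply (holder_clamp_continuity_pt a b tau C); auto; lra. }
  rewrite clamp_id in Hmin by exact Hxm.
  exists (f' xm), C; split; [auto | split; [exact HC | split; [exact Hh |]]].
  exists f'; split; [exact Hder | split; [| exact Hhol]].
  intros x Hx; specialize (Hmin x Hx); rewrite clamp_id in Hmin; auto.
Qed.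

Lemma DiffBounds_weaken a b tau m C m' C' f :
  m' <= m -> C <= C' -> DiffBounds a b tau m C f -> DiffBounds a b tau m' C' f.
Proof.
  intros Hm HC [Hh [f' [Hder [Hmin Hhol]]]].
  split; [exact Hh |]; exists f'; split; [exact Hder | split].
  - intros x Hx; specialize (Hmin x Hx); lra.
  - intros x y Hx Hy Hxy; eapply Rle_trans; [apply Hhol; auto |].
    apply Rmult_le_compat_r; [left; apply exp_pos | exact HC].
Qed.

Lemma uniform_DiffBounds a b tau (S : list (R -> R)) :
  a < b -> 0 < tau -> (forall f, In f S -> Diff1tau a b tau f) ->
  exists m C, 0 < m /\ 0 <= C /\ forall f, In f S -> DiffBounds a b tau m C f.
Proof.
  intros Hab Htau; induction S as [|f S IH]; intros HS.
  - exists 1, 0; split; [lra | split; [lra | intros f []]].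
  - destruct IH as [m [C [Hm [HC HSb]]]]; [intros g Hg; apply HS; right; exact Hg |].
    destruct (Diff1tau_bounds a b tau f Hab Htau (HS f (or_introl eq_refl)))
      as [m1 [C1 [Hm1 [_ Hf]]]].
    exists (Rmin m m1), (Rmax C C1); split; [apply Rmin_pos; auto |].
    split; [eapply Rle_trans; [exact HC | apply Rmax_l] |].
    intros g [<- | Hg].
    + apply (DiffBounds_weaken a b tau m1 C1); [apply Rmin_r | apply Rmax_r | exact Hf].
    + apply (DiffBounds_weaken a b tau m C); [apply Rmin_l | apply Rmax_l | auto].
Qed.

Lemma holder_on_subinterval a b tau C g P Q x y :
  0 <= tau -> 0 <= C -> holder_on a b tau C g -> inI a b P -> inI a b Q ->
  P <= x <= Q -> P <= y <= Q ->
  Rabs (g x - g y) <= C * Rpower (Q - P) tau.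
Proof.
  intros Htau HC Hhol HP HQ Hx Hy; unfold inI in *.
  destruct (Req_dec x y) as [<- | Hne].
  - rewrite Rminus_diag, Rabs_R0; apply Rmult_le_pos; [lra | left; apply exp_pos].
  - eapply Rle_trans; [apply Hhol; auto; unfold inI; lra |].
    apply Rmult_le_compat_l; [lra |]; apply Rle_Rpower_l; [lra |].
    split; [apply Rabs_pos_lt; lra |]; unfold Rabs; destruct Rcase_abs; lra.
Qed.

(* If t fixes P and Q then t' = 1 somewhere in [P, Q]; the Hoelder bound on t' - 1
   and the mean value theorem on [P, x] bound the displacement. *)
Lemma fixed_endpoints_displacement_le a b tau m C t P Q x :
  0 <= tau -> 0 <= C -> DiffBounds a b tau m C t -> inI a b P -> inI a b Q -> P < Q ->
  t P = P -> t Q = Q -> P <= x <= Q ->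
  Rabs (t x - x) <= C * Rpower (Q - P) tau * (Q - P).
Proof.
  intros Htau HC [Hh [t' [Hder [_ Hhol]]]] HP HQ HPQ HtP HtQ Hx.
  pose proof HP as [HaP _]; pose proof HQ as [_ HQb].
  destruct (mvt_derivI a b t t' P Q Hh Hder HaP HPQ HQb) as [eta [Heta Eeta]].
  assert (Ht'eta : t' eta = 1).
  { rewrite HtP, HtQ in Eeta; apply Rmult_eq_reg_r with (Q - P); lra. }
  destruct (Req_dec x P) as [-> | HxP].
  - rewrite HtP, Rminus_diag, Rabs_R0.
    apply Rmult_le_pos; [apply Rmult_le_pos; [lra | left; apply exp_pos] | lra].
  - destruct (mvt_derivI a b t t' P x Hh Hder HaP ltac:(lra) ltac:(lra)) as [xi [Hxi Exi]].
    replace (t x - x) with ((t' xi - t' eta) * (x - P)) by (rewrite Ht'eta; lra).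
    rewrite Rabs_mult.
    apply Rmult_le_compat; try apply Rabs_pos.
    + apply (holder_on_subinterval a b); auto; lra.
    + unfold Rabs; destruct Rcase_abs; lra.
Qed.

Lemma displaced_length_le a b tau m C t P Q p q :
  0 <= tau -> 0 <= C -> DiffBounds a b tau m C t -> inI a b P -> inI a b Q -> P < Q ->
  t P = P -> t Q = Q -> P <= p -> p < q -> q <= Q ->
  disjoint (openI (t p) (t q)) (openI p q) ->
  q - p <= 2 * C * Rpower (Q - P) tau * (Q - P).
Proof.
  intros Htau HC Ht HP HQ HPQ HtP HtQ HPp Hpq HqQ Hdisj.
  set (x := (p + q) / 2).
  assert (Hmove := fixed_endpoints_displacement_le a b tau m C t P Q x
                     Htau HC Ht HP HQ HPQ HtP HtQ ltac:(unfold x; lra)).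
  destruct (Rle_or_lt (q - p) (2 * C * Rpower (Q - P) tau * (Q - P))) as [| Hlong]; auto.
  exfalso; apply (Hdisj (t x)); unfold openI; split.
  - destruct (HomeoPlus_incr_bij a b t (proj1 Ht)) as [_ [_ Hincr]].
    unfold inI in *; split; apply Hincr; unfold inI, x; lra.
  - revert Hmove; unfold Rabs; destruct Rcase_abs; unfold x in *; lra.
Qed.

Lemma exp_le_exp x y : x <= y -> exp x <= exp y.
Proof. intros [Hlt | ->]; [left; apply exp_increasing; exact Hlt | lra]. Qed.

Lemma exp_neg_le_ratio m x y :
  0 < m -> m <= x -> m <= y -> exp (- (Rabs (x - y) / m)) <= x / y.
Proof.
  intros Hm Hx Hy.
  assert (Hyx : y / x <= 1 + Rabs (x - y) / m).
  { replace (y / x) with (1 + (y - x) / x) by (field; lra).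
    apply Rplus_le_compat_l; unfold Rdiv.
    apply Rle_trans with (Rabs (x - y) * / x).
    - apply Rmult_le_compat_r; [left; apply Rinv_0_lt_compat; lra |].
      unfold Rabs; destruct Rcase_abs; lra.
    - apply Rmult_le_compat_l; [apply Rabs_pos | apply Rinv_le_contravar; lra]. }
  assert (Hexp := exp_ineq1_le (Rabs (x - y) / m)).
  rewrite exp_Ropp; replace (x / y) with (/ (y / x)) by (field; lra).
  apply Rinv_le_contravar; [apply Rdiv_lt_0_compat |]; lra.
Qed.

Lemma distortion_ratio_ge a b tau m C f P Q p q :
  0 <= tau -> 0 < m -> 0 <= C -> DiffBounds a b tau m C f -> inI a b P -> inI a b Q ->
  P <= p -> p < q -> q <= Q ->
  (q - p) / (Q - P) * exp (- (C / m * Rpower (Q - P) tau)) <= (f q - f p) / (f Q - f P).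
Proof.
  intros Htau Hm HC [Hh [f' [Hder [Hmin Hhol]]]] HP HQ HPp Hpq HqQ.
  pose proof HP as [HaP _]; pose proof HQ as [_ HQb].
  destruct (mvt_derivI a b f f' p q Hh Hder ltac:(lra) Hpq ltac:(lra)) as [x1 [Hx1 ->]].
  destruct (mvt_derivI a b f f' P Q Hh Hder HaP ltac:(lra) HQb) as [x2 [Hx2 ->]].
  assert (Hm1 : m <= f' x1) by (apply Hmin; unfold inI; lra).
  assert (Hm2 : m <= f' x2) by (apply Hmin; unfold inI; lra).
  replace (f' x1 * (q - p) / (f' x2 * (Q - P)))
    with ((q - p) / (Q - P) * (f' x1 / f' x2)) by (field; lra).
  apply Rmult_le_compat_l; [apply Rdiv_le_0_compat; lra |].
  eapply Rle_trans; [| apply (exp_neg_le_ratio m); auto].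
  assert (Hosc : Rabs (f' x1 - f' x2) <= C * Rpower (Q - P) tau)
    by (apply (holder_on_subinterval a b); auto; lra).
  apply exp_le_exp, Ropp_le_contravar.
  replace (C / m * Rpower (Q - P) tau) with (C * Rpower (Q - P) tau / m) by (field; lra).
  apply Rmult_le_compat_r; [left; apply Rinv_0_lt_compat |]; lra.
Qed.

Lemma Rpower_le_of_le_mul x y K e t :
  0 <= t -> 0 < x -> 0 < y -> 0 < K -> x <= K * Rpower y e ->
  Rpower x t <= Rpower K t * Rpower y (e * t).
Proof.
  intros Ht Hx Hy HK Hle.
  rewrite <- Rpower_mult, Rpower_mult_distr by (auto; apply exp_pos).
  apply Rle_Rpower_l; auto.
Qed.

Lemma iterated_power_bound (D : nat -> nat -> R) (M e : R) (J : nat) :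
  0 <= M -> 0 <= e ->
  (forall n j, (j <= J)%nat -> 0 < D n j) ->
  (forall n j, (j < J)%nat -> D n (S j) <= M * Rpower (D n j) e) ->
  forall j, (j <= J)%nat ->
  exists K, 0 < K /\ forall n, D n j <= K * Rpower (D n 0%nat) (e ^ j).
Proof.
  intros HM He Hpos Hstep j; induction j as [|j IH]; intros Hj.
  - exists 1; split; [lra |]; intros n.
    rewrite pow_O, Rpower_1 by (apply Hpos; lia); lra.
  - destruct (IH ltac:(lia)) as [K [HK HD]].
    assert (HKe : 0 < Rpower K e) by apply exp_pos.
    exists (M * Rpower K e + 1); split; [nra |]; intros n.
    assert (Hpow := Rpower_le_of_le_mul (D n j) (D n 0%nat) K (e ^ j) e He
                      (Hpos n j ltac:(lia)) (Hpos n 0%nat ltac:(lia)) HK (HD n)).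
    replace (e ^ j * e) with (e ^ S j) in Hpow by (simpl; ring).
    assert (H0 : 0 < Rpower (D n 0%nat) (e ^ S j)) by apply exp_pos.
    specialize (Hstep n j ltac:(lia)).
    assert (M * Rpower (D n j) e <= M * (Rpower K e * Rpower (D n 0%nat) (e ^ S j)))
      by (apply Rmult_le_compat_l; auto).
    nra.
Qed.

Lemma ex_series_Rpower_dominated (x y : nat -> R) (K B E u : R) :
  0 <= K -> u <= E -> (forall n, 0 < x n <= B) ->
  (forall n, 0 <= y n <= K * Rpower (x n) E) ->
  ex_series (fun n => Rpower (x n) u) -> ex_series y.
Proof.
  intros HK HuE Hx Hy Hser.
  apply (ex_series_le y (fun n => K * Rpower B (E - u) * Rpower (x n) u)).
  - intros n; change (norm (y n)) with (Rabs (y n)).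
    destruct (Hx n) as [Hxpos HxB]; destruct (Hy n) as [Hy0 HyE].
    rewrite Rabs_pos_eq by exact Hy0.
    replace E with (u + (E - u)) in HyE by ring; rewrite Rpower_plus in HyE.
    assert (Rpower (x n) (E - u) <= Rpower B (E - u)) by (apply Rle_Rpower_l; lra).
    assert (0 < Rpower (x n) u) by apply exp_pos.
    assert (K * (Rpower (x n) u * Rpower (x n) (E - u)) <= K * (Rpower (x n) u * Rpower B (E - u)))
      by (apply Rmult_le_compat_l; [| apply Rmult_le_compat_l]; lra).
    lra.
  - eapply ex_series_ext; [| apply (ex_series_scal_l (K * Rpower B (E - u)) _ Hser)].
    intros n; reflexivity.
Qed.

Lemma ratio_bounded_below (r A : nat -> R) (c : R) :
  0 <= c -> (forall n, 0 <= A n) -> ex_series A -> 0 < r 0%nat ->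
  (forall n, r n * exp (- (c * A n)) <= r (S n)) ->
  exists eps, 0 < eps /\ forall n, eps <= r n.
Proof.
  intros Hc HA [l Hl] Hr0 Hstep.
  assert (Hsum : forall n, sum_n A n <= l).
  { apply is_lim_seq_incr_compare; [exact Hl |].
    intros n; rewrite sum_Sn; specialize (HA (S n)).
    change (plus (sum_n A n) (A (S n))) with (sum_n A n + A (S n)); lra. }
  assert (Hprod : forall n, r 0%nat * exp (- (c * sum_n A n)) <= r (S n)).
  { induction n as [|n IH].
    - rewrite sum_O; apply Hstep.
    - rewrite sum_Sn; change (plus (sum_n A n) (A (S n))) with (sum_n A n + A (S n)).
      rewrite Rmult_plus_distr_l, Ropp_plus_distr, exp_plus, <- Rmult_assoc.
      eapply Rle_trans; [| apply Hstep].
      apply Rmult_le_compat_r; [left; apply exp_pos | exact IH]. }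
  assert (Hl0 : 0 <= l).
  { specialize (Hsum 0%nat); rewrite sum_O in Hsum; specialize (HA 0%nat); lra. }
  exists (r 0%nat * exp (- (c * l))); split; [apply Rmult_lt_0_compat; [lra | apply exp_pos] |].
  intros [|n].
  - rewrite <- (Rmult_1_r (r 0%nat)) at 2; rewrite <- exp_0.
    apply Rmult_le_compat_l; [lra |]; apply exp_le_exp.
    assert (0 <= c * l) by (apply Rmult_le_pos; auto); lra.
  - eapply Rle_trans; [| apply Hprod].
    apply Rmult_le_compat_l; [lra |]; apply exp_le_exp, Ropp_le_contravar.
    apply Rmult_le_compat_l; auto.
Qed.

Lemma ratio_summable_absurd (r A : nat -> R) (c M : R) :
  0 <= c -> 0 <= M -> (forall n, 0 <= A n) -> ex_series A -> 0 < r 0%nat ->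
  (forall n, r n * exp (- (c * A n)) <= r (S n)) ->
  ~ (forall n, r n <= M * A n).
Proof.
  intros Hc HM HA Hser Hr0 Hstep Hup.
  destruct (ratio_bounded_below r A c Hc HA Hser Hr0 Hstep) as [eps [Heps Hlow]].
  assert (Hlim := ex_series_lim_0 A Hser); apply is_lim_seq_Reals in Hlim.
  destruct (Hlim (eps / (M + 1))) as [N HN]; [apply Rdiv_lt_0_compat; lra |].
  specialize (HN N (Nat.le_refl N)); unfold R_dist in HN; rewrite Rminus_0_r in HN.
  assert (HAN : A N * (M + 1) < eps).
  { apply Rmult_lt_reg_r with (/ (M + 1)); [apply Rinv_0_lt_compat; lra |].
    rewrite Rmult_assoc, Rinv_r, Rmult_1_r by lra.
    eapply Rle_lt_trans; [apply Rle_abs | exact HN]. }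
  specialize (Hlow N); specialize (Hup N); specialize (HA N); nra.
Qed.

Section NestedLengths.

Variables (a b tau m C : R) (k : nat) (gens : list (R -> R)) (c d : nat -> R) (s : nat -> R -> R).

Hypothesis Htau : 0 <= tau.
Hypothesis Hm : 0 < m.
Hypothesis HC : 0 <= C.
Hypothesis HS : forall f, In f gens -> DiffBounds a b tau m C f.
Hypothesis Hcd : forall i, (1 <= i <= k)%nat -> a <= c i /\ c i < d i /\ d i <= b.
Hypothesis Hnested : forall i, (2 <= i <= k)%nat ->
  strict_sup (openI (c (i - 1)%nat) (d (i - 1)%nat)) (openI (c i) (d i)).
Hypothesis Hs : forall n, (1 <= n)%nat -> In (s n) gens.
Hypothesis Hdisp : forall i n, (2 <= i <= k)%nat ->
  exists t, In t gens /\
    disjoint (img t (img (word s n) (openI (c i) (d i))))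
             (img (word s n) (openI (c i) (d i))) /\
    set_eq (img t (img (word s n) (openI (c (i - 1)%nat) (d (i - 1)%nat))))
           (img (word s n) (openI (c (i - 1)%nat) (d (i - 1)%nat))).

Definition nest_len (n i : nat) : R := word s n (d i) - word s n (c i).

Lemma gens_incr_bij f : In f gens -> incr_bij a b f.
Proof. intros Hf; apply HomeoPlus_incr_bij, (HS f Hf). Qed.

Lemma word_incr n : incr_bij a b (word s n).
Proof. apply word_incr_bij; intros j Hj; apply gens_incr_bij, Hs, Hj. Qed.

Lemma endpoints_inI i : (1 <= i <= k)%nat -> inI a b (c i) /\ inI a b (d i) /\ c i < d i.
Proof. intros Hi; destruct (Hcd i Hi) as [? [? ?]]; unfold inI; repeat split; lra. Qed.

Lemma word_endpoints n i : (1 <= i <= k)%nat ->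
  inI a b (word s n (c i)) /\ inI a b (word s n (d i)) /\ word s n (c i) < word s n (d i).
Proof.
  intros Hi; destruct (endpoints_inI i Hi) as [Hc [Hd Hcd_i]].
  destruct (word_incr n) as [Wmap [_ Wincr]]; auto.
Qed.

Lemma nest_len_pos n i : (1 <= i <= k)%nat -> 0 < nest_len n i.
Proof. intros Hi; destruct (word_endpoints n i Hi) as [_ [_ Hlt]]; unfold nest_len; lra. Qed.

Lemma nest_len_le n i : (1 <= i <= k)%nat -> nest_len n i <= b - a.
Proof.
  intros Hi; destruct (word_endpoints n i Hi) as [[Hc _] [[_ Hd] _]]; unfold nest_len; lra.
Qed.

Lemma word_nested_endpoints n i : (2 <= i <= k)%nat ->
  word s n (c (i - 1)%nat) <= word s n (c i) /\ word s n (d i) <= word s n (d (i - 1)%nat).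
Proof.
  intros Hi.
  destruct (endpoints_inI i ltac:(lia)) as [Hc [Hd Hcd_i]].
  destruct (endpoints_inI (i - 1) ltac:(lia)) as [Hc' [Hd' _]].
  destruct (openI_incl_le _ _ _ _ Hcd_i (proj1 (Hnested i Hi))) as [Hcc Hdd].
  split; apply (incr_bij_le a b); auto; apply word_incr.
Qed.

Lemma nest_len_level_le n i : (2 <= i <= k)%nat ->
  nest_len n i <= 2 * C * Rpower (nest_len n (i - 1)) tau * nest_len n (i - 1).
Proof.
  intros Hi; destruct (Hdisp i n Hi) as [t [Ht [Hdisj Hstable]]].
  destruct (endpoints_inI i ltac:(lia)) as [Hc [Hd _]].
  destruct (endpoints_inI (i - 1) ltac:(lia)) as [Hc' [Hd' _]].
  destruct (word_endpoints n i ltac:(lia)) as [_ [_ Hpq]].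
  destruct (word_endpoints n (i - 1) ltac:(lia)) as [HP [HQ HPQ]].
  destruct (word_nested_endpoints n i Hi) as [HPp HqQ].
  pose proof (gens_incr_bij t Ht) as Htb.
  assert (Hfix : t (word s n (c (i - 1)%nat)) = word s n (c (i - 1)%nat) /\
                 t (word s n (d (i - 1)%nat)) = word s n (d (i - 1)%nat)).
  { apply openI_set_eq_endpoints; [destruct Htb as [_ [_ Hincr]]; auto | exact HPQ |].
    intros y.
    etransitivity; [symmetry; apply (img_img_openI a b); auto; apply word_incr |].
    etransitivity; [apply Hstable | apply (img_openI a b); auto; apply word_incr]. }
  apply (displaced_length_le a b tau m C t); auto; try tauto.
  intros y [Hy1 Hy2]; apply (Hdisj y); split.
  - apply (img_img_openI a b); auto; apply word_incr.
  - apply (img_openI a b); auto; apply word_incr.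
Qed.

Lemma nest_len_ratio_le n i : (2 <= i <= k)%nat ->
  nest_len n i / nest_len n (i - 1) <= 2 * C * Rpower (nest_len n (i - 1)) tau.
Proof.
  intros Hi; assert (Hpos := nest_len_pos n (i - 1) ltac:(lia)).
  apply Rmult_le_reg_r with (nest_len n (i - 1)); [exact Hpos |].
  unfold Rdiv; rewrite Rmult_assoc, Rinv_l by lra.
  rewrite Rmult_1_r; apply nest_len_level_le, Hi.
Qed.

Lemma nest_len_ratio_step n i : (2 <= i <= k)%nat ->
  nest_len n i / nest_len n (i - 1) * exp (- (C / m * Rpower (nest_len n (i - 1)) tau)) <=
  nest_len (S n) i / nest_len (S n) (i - 1).
Proof.
  intros Hi.
  destruct (word_endpoints n i ltac:(lia)) as [_ [_ Hpq]].
  destruct (word_endpoints n (i - 1) ltac:(lia)) as [HP [HQ _]].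
  destruct (word_nested_endpoints n i Hi) as [HPp HqQ].
  unfold nest_len; cbn [word].
  apply (distortion_ratio_ge a b tau m C); auto.
  apply HS, Hs; lia.
Qed.

Lemma nest_len_power_bound : (2 <= k)%nat ->
  exists K, 0 < K /\
    forall n, nest_len n (k - 1) <= K * Rpower (nest_len n 1) ((1 + tau) ^ (k - 2)).
Proof.
  intros Hk; replace (k - 1)%nat with (S (k - 2)) by lia.
  apply (iterated_power_bound (fun n j => nest_len n (S j)) (2 * C) (1 + tau) (k - 2));
    try lia; try lra.
  - intros n j Hj; apply nest_len_pos; lia.
  - intros n j Hj.
    rewrite Rpower_plus, Rpower_1 by (apply nest_len_pos; lia).
    assert (Hlev := nest_len_level_le n (S (S j)) ltac:(lia)).
    replace (S (S j) - 1)%nat with (S j) in Hlev by lia; lra.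
Qed.

Lemma nest_len_summable u : (2 <= k)%nat -> u <= tau * (1 + tau) ^ (k - 2) ->
  ex_series (fun n => Rpower (nest_len n 1) u) ->
  ex_series (fun n => Rpower (nest_len n (k - 1)) tau).
Proof.
  intros Hk Hu Hser; destruct (nest_len_power_bound Hk) as [K [HK Hpow]].
  apply (ex_series_Rpower_dominated (fun n => nest_len n 1) _ (Rpower K tau) (b - a)
           (tau * (1 + tau) ^ (k - 2)) u); [left; apply exp_pos | exact Hu | | | exact Hser].
  - intros n; split; [apply nest_len_pos | apply nest_len_le]; lia.
  - intros n; split; [left; apply exp_pos |].
    rewrite (Rmult_comm tau); apply Rpower_le_of_le_mul; auto; apply nest_len_pos; lia.
Qed.

End NestedLengths.

Theorem lemma3p4 (a b : R) (k : nat) (u tau : R) :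
  a < b -> (2 <= k)%nat -> 0 < u <= 1 -> 0 < tau < 1 ->
  tau * (1 + tau) ^ (k - 2) >= u ->
  forall S : list (R -> R),
    (forall f, In f S -> Diff1tau a b tau f) ->
    ~ nesting a b k u S.
Proof.
  intros Hab Hk _ Htau Hcond gens Hgens [_ [c [d [s [Hcd [Hnested [Hs [Hser Hdisp]]]]]]]].
  destruct (uniform_DiffBounds a b tau gens Hab ltac:(lra) Hgens) as [m [C [Hm [HC HS]]]].
  assert (Htau0 : 0 <= tau) by lra.
  apply (ratio_summable_absurd (fun n => nest_len c d s n k / nest_len c d s n (k - 1))
           (fun n => Rpower (nest_len c d s n (k - 1)) tau) (C / m) (2 * C)).
  - apply Rdiv_le_0_compat; lra.
  - lra.
  - intros n; left; apply exp_pos.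
  - apply (nest_len_summable a b tau m C k gens c d s) with (u := u); auto; lra.
  - apply Rdiv_lt_0_compat; apply (nest_len_pos a b tau m C k gens c d s); auto; lia.
  - intros n; apply (nest_len_ratio_step a b tau m C k gens c d s); auto; lia.
  - intros n; apply (nest_len_ratio_le a b tau m C k gens c d s); auto; lia.
Qed.
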